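(* Let $\mathbf x=(k,S,\Lambda,\mathbf a)$ be an abelian group $k$-parameter and $G=G_{\mathbf x}$. (1) If $U\subseteq{}^\omega S$, $u\subseteq{}^\omega S\setminus U$ is finite, $j\le k$, $|u|\le j$ and $|U|\le\aleph_{k-j}$, then the abelian group $G_{U\cup u}/G_{U,u}$ is free. (2) If $U\subseteq{}^\omega S$ and $|U|\le\aleph_k$, then $G_U$ is free.
   Context: For a set $S$, ${}^\omega S$ is the set of all functions $\omega\to S$. An abelian group $k$-parameter is $\mathbf x=(k,S,\Lambda,\mathbf a)$ with $k<\omega$, $S$ a set, $\Lambda\subseteq {}^{k+1}({}^\omega S)$ (sequences $\bar\eta=\langle\eta_0,\dots,\eta_k\rangle$, $\eta_\ell\in{}^\omega S$) and $\mathbf a:\Lambda\times\omega\to\mathbb Z$, $\mathbf a_{\bar\eta,n}=\mathbf a(\bar\eta,n)$. For $\bar\eta\in\Lambda$, $m\le k$, $n<\omega$, $\bar\eta\upharpoonleft\langle m,n\rangle$ is the sequence obtained from $\bar\eta$ by replacing $\eta_m$ with $\eta_m\restriction n$. $\Lambda_m=\{\bar\eta\upharpoonleft\langle m,n\rangle:\bar\eta\in\Lambda,n<\omega\}$, $\Lambda_{\le k}=\bigcup_{m\le k}\Lambda_m$. $G_{\mathbf x}$ is the abelian group generated by $z$, $x_{\bar\nu}$ ($\bar\nu\in\Lambda_{\le k}$), $y_{\bar\eta,n}$ ($\bar\eta\in\Lambda,n<\omega$) freely except for the relations $(n!)y_{\bar\eta,n+1}=y_{\bar\eta,n}+\mathbf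 a_{\bar\eta,n}z+\sum_{m\le k}x_{\bar\eta\upharpoonleft\langle m,n\rangle}$ ($\bar\eta\in\Lambda$, $n<\omega$). For $U\subseteq{}^\omega S$, $G_U$ is the subgroup of $G_{\mathbf x}$ generated by $\{z\}\cup\{y_{\bar\eta,n}:\bar\eta\in\Lambda\cap{}^{k+1}U,n<\omega\}\cup\{x_{\bar\eta\upharpoonleft\langle m,n\rangle}:\bar\eta\in\Lambda\cap{}^{k+1}U,m\le k,n<\omega\}$. For $U\subseteq{}^\omega S$ and finite $u\subseteq{}^\omega S$, $G_{U,u}$ is the subgroup of $G_{\mathbf x}$ generated by $\bigcup_{\eta\in u}G_{U\cup(u\setminus\{\eta\})}$ (so $G_{U,\emptyset}=\{0\}$). *)

From mathcomp Require Import all_boot all_algebra.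
From Stdlib Require Import ClassicalDescription.

Set Implicit Arguments.
Unset Strict Implicit.
Unset Printing Implicit Defensive.

Import GRing.Theory.
Local Open Scope ring_scope.

Definition well_order_on (T : Type) (X : T -> Prop) (R : T -> T -> Prop) : Prop :=
  (forall x, X x -> ~ R x x) /\
  (forall x y z, X x -> X y -> X z -> R x y -> R y z -> R x z) /\
  (forall x y, X x -> X y -> x = y \/ R x y \/ R y x) /\
  (forall Y : T -> Prop, (forall y, Y y -> X y) -> (exists y, Y y) ->
     exists m, Y m /\ forall y, Y y -> ~ R y m).

(* |X| <= aleph_0  iff X injects into omega;
   |X| <= aleph_(n+1) iff X injects into omega_(n+1), i.e. X carries a
   well-ordering all of whose proper initial segments have size <= aleph_n. *)
Fixpoint card_le_aleph (n : nat) (T : Type) (X : T -> Prop) {struct n} : Prop :=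
  match n with
  | 0 => exists f : T -> nat, forall x y, X x -> X y -> f x = f y -> x = y
  | n'.+1 => exists R : T -> T -> Prop, well_order_on X R /\
               forall x, X x -> card_le_aleph n' (fun y => X y /\ R y x)
  end.

Definition wseq (k : nat) (S : Type) := 'I_k.+1 -> nat -> S.

(* Tuples in which each coordinate is either a finite or an omega-sequence;
   Lambda_{<=k} consists of such tuples. *)
Definition mseq (k : nat) (S : Type) := 'I_k.+1 -> (seq S + (nat -> S))%type.

Definition restr (k : nat) (S : Type) (eta : wseq k S) (m : 'I_k.+1) (n : nat)
  : mseq k S :=
  fun l => if l == m then inl (mkseq (eta m) n) else inr (eta l).

Inductive gen (k : nat) (S : Type) : Type :=
| gz : gen k S
| gx : mseq k S -> gen k S
| gy : wseq k S -> nat -> gen k S.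

(* Formal Z-combinations of generator symbols (the free abelian group on the
   generators sits inside this as the finitely supported functions). *)
Definition vect (k : nat) (S : Type) := gen k S -> int.

Definition delta (k : nat) (S : Type) (g : gen k S) : vect k S :=
  fun g' => if excluded_middle_informative (g' = g) then 1 else 0.

Definition span (k : nat) (S : Type) (P : vect k S -> Prop) (v : vect k S) : Prop :=
  exists l : seq (int * vect k S),
    (forall p, List.In p l -> P p.2) /\
    v = (fun g => \sum_(p <- l) p.1 * p.2 g).

Section Param.
Variables (k : nat) (S : Type) (Lam : wseq k S -> Prop) (a : wseq k S -> nat -> int).

(* The defining relation (n!) y_{eta,n+1} = y_{eta,n} + a_{eta,n} z
   + sum_{m<=k} x_{eta |` <m,n>}, written as a vector that must vanish. *)
Definition relv (eta : wseq k S) (n : nat) : vect k S :=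
  fun g => (n`!)%:Z * delta (gy eta n.+1) g - delta (gy eta n) g
           - a eta n * delta (gz k S) g
           - \sum_(m < k.+1) delta (gx (restr eta m n)) g.

Definition relvecs (v : vect k S) : Prop :=
  exists eta n, Lam eta /\ v = relv eta n.

(* The preimage, in the free abelian group, of the subgroup of
   G_x = F / <relations> generated by (the images of) the vectors in P.
   Thus the subgroup of G_x generated by P is  Gsub P / Gsub (fun _ => False). *)
Definition Gsub (P : vect k S -> Prop) : vect k S -> Prop :=
  span (fun v => P v \/ relvecs v).

Definition gensU (U : (nat -> S) -> Prop) (v : vect k S) : Prop :=
  v = delta (gz k S) \/
  (exists eta n, Lam eta /\ (forall l, U (eta l)) /\ v = delta (gy eta n)) \/
  (exists eta m n, Lam eta /\ (forall l, U (eta l)) /\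
                   v = delta (gx (restr eta m n))).

Definition gensUu (U : (nat -> S) -> Prop) (u : seq (nat -> S)) (v : vect k S) : Prop :=
  exists eta, List.In eta u /\
    gensU (fun nu => U nu \/ (List.In nu u /\ nu <> eta)) v.

End Param.

(* For subgroups H2 <= H1 of the group of vectors, the quotient H1 / H2 is a
   free abelian group: it has a basis (b_i + H2)_{i in I}. *)
Definition free_quot (k : nat) (S : Type) (H1 H2 : vect k S -> Prop) : Prop :=
  exists (I : Type) (b : I -> vect k S),
    (forall i, H1 (b i)) /\
    (forall v, H1 v -> exists l : seq (int * I),
        H2 (fun g => v g - \sum_(p <- l) p.1 * b p.2 g)) /\
    (forall l : seq (int * I), List.NoDup (map snd l) ->
        H2 (fun g => \sum_(p <- l) p.1 * b p.2 g) ->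
        forall p, List.In p l -> p.1 = 0).

(* Let W be the set of tuples of Λ whose coordinates lie in U ∪ u and which contain every element
   of u.  By induction on the cardinal of U, W carries a well-founded order in which every η has a
   coordinate m, not needed to cover u, and a length N such that every other tuple of W agreeing
   with η off m and on the first n ≥ N terms of η_m lies above η.  For countable U order by the
   largest code of a U-coordinate; for |U| = ℵ_(i+1) order first by the largest U-coordinate α
   (for a well-ordering of U of type ω_(i+1)), then by the order obtained inductively for the
   initial segment below α, with α added to u.
   Given such an order, the relation (η, n) is solved for y_(η,n) when n < N and for x_(η↾⟨m,n⟩)
   otherwise.  The generators of G_(U∪u) that are neither solved for nor among the generators of
   G_(U,u) form a basis of the quotient: they span by well-founded induction along the order, and
   they are independent because in a relation among them the largest relation used has a
   coefficient at its solved generator that nothing else can cancel.  Part (2) is the case u = ∅. *)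

From mathcomp Require Import all_boot all_algebra.
From Stdlib Require Import ClassicalDescription Classical FunctionalExtensionality.
From Stdlib Require Import ProofIrrelevance IndefiniteDescription.
From mathcomp Require Import ring.
Set Implicit Arguments.
Unset Strict Implicit.
Unset Printing Implicit Defensive.
Import GRing.Theory.

Definition asbool (P : Prop) : bool := if excluded_middle_informative P then true else false.

Lemma asboolP (P : Prop) : reflect P (asbool P).
Proof. by rewrite /asbool; case: excluded_middle_informative => H; constructor. Qed.

Lemma In_mem (T : eqType) (x : T) (s : seq T) : List.In x s <-> x \in s.
Proof.
elim: s => [|y s IH] //=; rewrite in_cons; split.
  by case=> [->|/IH ->]; rewrite ?eqxx ?orbT.
by case/orP=> [/eqP ->|/IH]; auto.
Qed.

Lemma sig_inj (T : Type) (P : T -> Prop) (x y : {t : T | P t}) :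
  proj1_sig x = proj1_sig y -> x = y.
Proof. by case: x y => [x px] [y py] /= E; subst y; rewrite (proof_irrelevance _ px py). Qed.

Section WellFoundedOrders.
Variable T : Type.
Implicit Types (X Y : T -> Prop) (r : T -> T -> Prop).

Definition strict_wf_on X r : Prop :=
  (forall x, X x -> ~ r x x) /\
  (forall x y z, X x -> X y -> X z -> r x y -> r y z -> r x z) /\
  (forall Y, (forall y, Y y -> X y) -> (exists y, Y y) ->
     exists y, Y y /\ forall y', Y y' -> ~ r y' y).

Lemma well_order_on_strict_wf X r : well_order_on X r -> strict_wf_on X r.
Proof. by case=> irr [tr [_ wf]]. Qed.

Lemma strict_wf_on_sub X X' r :
  (forall x, X' x -> X x) -> strict_wf_on X r -> strict_wf_on X' r.
Proof.
move=> sub [irr [tr wf]]; split; first by move=> x /sub; apply: irr.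
split; first by move=> x y z /sub ? /sub ? /sub ?; apply: tr.
by move=> Y YX; apply: wf => y /YX /sub.
Qed.

Lemma strict_wf_on_measure X (c : T -> nat) : strict_wf_on X (fun x y => c x < c y).
Proof.
split; first by move=> x _; rewrite ltnn.
split; first by move=> x y z _ _ _; apply: ltn_trans.
move=> Y _ [y0 Y0].
have hex : exists n, asbool (exists y, Y y /\ c y = n).
  by exists (c y0); apply/asboolP; exists y0.
case: (ex_minnP hex) => n /asboolP [y [Yy <-]] ymin.
exists y; split=> // y' Yy'; apply/negP; rewrite -leqNgt; apply: ymin.
by apply/asboolP; exists y'.
Qed.

Lemma strict_wf_on_ind X r (P : T -> Prop) : strict_wf_on X r ->
  (forall x, X x -> (forall y, X y -> r y x -> P y) -> P x) -> forall x, X x -> P x.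
Proof.
move=> [_ [_ wf]] step x0 Xx0; apply: NNPP => nP0.
case: (wf (fun x => X x /\ ~ P x)) => [y []//|| y [[Xy nPy] ymin]]; first by exists x0.
by apply: nPy; apply: step => // z Xz rzy; apply: NNPP => nPz; apply: (ymin z).
Qed.

Lemma ex_maximal_In (P : T -> Prop) r :
  (forall x, P x -> ~ r x x) ->
  (forall x y z, P x -> P y -> P z -> r x y -> r y z -> r x z) ->
  forall L, (exists x, List.In x L /\ P x) ->
  exists x, List.In x L /\ P x /\ forall y, List.In y L -> P y -> ~ r x y.
Proof.
move=> irr tr; elim=> [[x [[] _]]|y L IH] Lne.
case: (classic (exists x, List.In x L /\ P x)) => [/IH [m [Lm [Pm mmax]]]|noL].
  case: (classic (P y /\ r m y)) => [[Py rmy]|notmy].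
    exists y; split; [by left|split=> // z [<-|Lz] Pz ryz]; first exact: irr ryz.
    exact: mmax Lz Pz (tr _ _ _ Pm Py Pz rmy ryz).
  exists m; split; [by right|split=> // z [<-|Lz] Pz]; last exact: mmax.
  by move=> rmz; apply: notmy.
case: Lne => x [[<-|Lx] Px]; last by case: noL; exists x.
exists y; split; [by left|split=> // z [<-|Lz] Pz]; first exact: irr.
by case: noL; exists z.
Qed.

End WellFoundedOrders.

Section Lexicographic.
Variables (T K : Type) (X : T -> Prop) (key : T -> K).
Variables (rk : K -> K -> Prop) (r : K -> T -> T -> Prop).
Hypothesis wf_key : strict_wf_on (fun c => exists x, X x /\ key x = c) rk.
Hypothesis wf_fiber : forall c, (exists x, X x /\ key x = c) ->
  strict_wf_on (fun x => X x /\ key x = c) (r c).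

Definition lex x y := rk (key x) (key y) \/ (key x = key y /\ r (key y) x y).

Lemma strict_wf_on_lex : strict_wf_on X lex.
Proof.
case: wf_key => irrk [trk wfk]; split.
  move=> x Xx [rxx|[_ rxx]]; first by apply: irrk rxx; exists x.
  by case: (wf_fiber (ex_intro _ x (conj Xx erefl))) => irr _; apply: irr rxx.
split.
  move=> x y z Xx Xy Xz [kxy|[exy rxy]] [kyz|[eyz ryz]].
  - by left; apply: trk kxy kyz; [exists x|exists y|exists z].
  - by left; rewrite -eyz.
  - by left; rewrite exy.
  - right; split; first by rewrite exy.
    case: (wf_fiber (ex_intro _ z (conj Xz erefl))) => _ [tr _].
    apply: (tr x y z) => //; try split=> //; first by rewrite exy.
    by rewrite -eyz.
move=> Y YX [y0 Y0].
case: (wfk (fun c => exists y, Y y /\ key y = c)).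
- by move=> c [y [/YX Xy <-]]; exists y.
- by exists (key y0), y0.
move=> c [[y1 [Y1 <-]] cmin].
case: (wf_fiber (ex_intro _ y1 (conj (YX _ Y1) erefl))) => _ [_ wf].
case: (wf (fun y => Y y /\ key y = key y1)).
- by move=> y [/YX].
- by exists y1.
move=> z [[Yz ez] zmin]; exists z; split=> // y' Yy' [ky'|[ey' ry']].
  by apply: (cmin (key y')); [exists y'|rewrite -ez].
by apply: (zmin y'); [rewrite ey'|rewrite -ez].
Qed.

End Lexicographic.

Definition opt_lt (K : Type) (rk : K -> K -> Prop) (o o' : option K) : Prop :=
  match o, o' with
  | None, Some _ => True
  | Some a, Some b => rk a b
  | _, _ => False
  end.

Lemma strict_wf_on_opt (K : Type) (X : K -> Prop) rk : strict_wf_on X rk ->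
  strict_wf_on (fun o => if o is Some a then X a else True) (opt_lt rk).
Proof.
move=> [irr [tr wf]]; split; first by case=> [a /irr|_ []].
split; first by case=> [a|] [b|] [c|] //=; apply: tr.
move=> Y YX Yne; case: (classic (Y None)) => [YN|nYN].
  by exists None; split=> // -[a|] _ [].
case: (wf (fun a => Y (Some a))).
- by move=> a /YX.
- by case: Yne => [[a Ya|//]]; exists a.
by move=> a [Ya amin]; exists (Some a); split=> // -[b /amin|/nYN].
Qed.

Lemma exists_redundant_coord (T : Type) (k : nat) (eta : 'I_k.+1 -> T) (u : seq T) :
  size u <= k -> (forall y, List.In y u -> exists l, eta l = y) ->
  exists m, forall y, List.In y u -> exists l, l != m /\ eta l = y.
Proof.
move=> su cov.
have pick y : exists l, List.In y u -> eta l = y.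
  case: (classic (List.In y u)) => [/cov [l El]|nyu]; first by exists l.
  by exists ord0 => /nyu.
pose f y := proj1_sig (constructive_indefinite_description _ (pick y)).
have fP y : List.In y u -> eta (f y) = y.
  exact: proj2_sig (constructive_indefinite_description _ (pick y)).
have mem_f y : List.In y u -> f y \in map f u.
  by elim: (u) => //= x s IH [<-|/IH]; rewrite in_cons ?eqxx // => ->; rewrite orbT.
have [m nm] : exists m, m \notin map f u.
  apply: NNPP => all_in; have : #|'I_k.+1| <= size u.
    rewrite -(size_map f); apply: leq_trans (card_size _); apply/subset_leq_card/subsetP.
    by move=> m _; apply: NNPP => /negP nm; apply: all_in; exists m.
  by rewrite card_ord => /leq_trans/(_ su); rewrite ltnn.
exists m => y yu; exists (f y); split; last exact: fP.
by apply: contraNneq nm => <-; apply: mem_f.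
Qed.

Lemma prefix_separates (S : Type) (L : seq (nat -> S)) (e : nat -> S) :
  exists N, forall n, N <= n -> forall w, List.In w L -> mkseq w n = mkseq e n -> w = e.
Proof.
elim: L => [|w L [N HN]]; first by exists 0.
case: (classic (w = e)) => [->|nwe].
  by exists N => n Nn w' [<- //|]; apply: HN.
have [i wie] : exists i, w i <> e i.
  apply: NNPP => H; apply: nwe; apply: functional_extensionality => i.
  by apply: NNPP => wie; apply: H; exists i.
exists (maxn N i.+1) => n; rewrite geq_max => /andP [Nn ni] w' [<- E|]; last exact: HN.
by case: wie; have := congr1 (fun s => nth (w 0) s i) E; rewrite !nth_mkseq.
Qed.

Lemma finite_below (T : Type) (U : T -> Prop) (f : T -> nat) :
  (forall x y, U x -> U y -> f x = f y -> x = y) ->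
  forall C, exists L, forall w, U w -> f w < C -> List.In w L.
Proof.
move=> finj; elim=> [|C [L HL]]; first by exists nil.
case: (classic (exists w, U w /\ f w = C)) => [[w0 [Uw0 fw0]]|noC].
  exists (w0 :: L) => w Uw; rewrite ltnS leq_eqVlt => /orP [/eqP fw|fC].
    by left; apply: finj => //; rewrite fw.
  by right; apply: HL.
exists L => w Uw; rewrite ltnS leq_eqVlt => /orP [/eqP fw|]; last exact: HL.
by case: noC; exists w.
Qed.

Lemma big1_In (R : nmodType) (X : Type) (L : seq X) (P : pred X) (F : X -> R) :
  (forall x, List.In x L -> P x -> F x = 0%R) -> (\sum_(x <- L | P x) F x)%R = 0%R.
Proof.
elim: L => [|x L IH] L0; first by rewrite big_nil.
rewrite big_cons IH => [|y Ly]; last by apply: L0; right.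
by case: ifP => // Px; rewrite L0 ?add0r //; left.
Qed.

Lemma filter_size_lt (X : Type) (p : pred X) (L : seq X) x :
  List.In x L -> ~~ p x -> size (filter p L) < size L.
Proof.
elim: L => [//|y L IH] /= [<-|Lx] px; first by rewrite (negbTE px) ltnS size_filter count_size.
by case: ifP => _ /=; rewrite ltnS ?IH // ltnW ?IH.
Qed.

Section Spans.
Variables (k : nat) (S : Type).
Implicit Types (P Q : vect k S -> Prop) (v w : vect k S).
Local Open Scope ring_scope.

Lemma span_sub P Q v : (forall w, P w -> Q w) -> span P v -> span Q v.
Proof. by move=> PQ [l [Hl ->]]; exists l; split=> // p /Hl /PQ. Qed.

Lemma span_eq P v w : (forall g, v g = w g) -> span P v -> span P w.
Proof. by move=> E; have -> : v = w by apply: functional_extensionality. Qed.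

Lemma span0 P : span P (fun _ => 0).
Proof. by exists [::]; split=> //; apply: functional_extensionality => g; rewrite big_nil. Qed.

Lemma span_gen P v : P v -> span P v.
Proof.
move=> Pv; exists [:: (1, v)]; split; first by move=> p [<-|].
by apply: functional_extensionality => g; rewrite big_seq1 mul1r.
Qed.

Lemma spanD P v w : span P v -> span P w -> span P (fun g => v g + w g).
Proof.
move=> [l1 [H1 ->]] [l2 [H2 ->]]; exists (l1 ++ l2); split.
  by move=> p lp; case: (List.in_app_or _ _ _ lp); [apply: H1|apply: H2].
by apply: functional_extensionality => g; rewrite big_cat.
Qed.

Lemma spanZ P c v : span P v -> span P (fun g => c * v g).
Proof.
move=> [l [Hl ->]]; exists [seq (c * p.1, p.2) | p <- l]; split.
  by move=> p /List.in_map_iff [q [<- /Hl]].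
apply: functional_extensionality => g; rewrite big_map mulr_sumr.
by apply: eq_bigr => p _; rewrite mulrA.
Qed.

Lemma spanB P v w : span P v -> span P w -> span P (fun g => v g - w g).
Proof.
move=> Pv /(spanZ (-1)) Pw; apply: span_eq (spanD Pv Pw) => g.
by rewrite mulN1r.
Qed.

Lemma span_sum P (I : Type) (s : seq I) (F : I -> vect k S) :
  (forall i, List.In i s -> span P (F i)) -> span P (fun g => \sum_(i <- s) F i g).
Proof.
elim: s => [|i s IH] Fs; first by apply: span_eq (span0 P) => g; rewrite big_nil.
apply: span_eq (spanD (Fs i (or_introl erefl)) (IH (fun j sj => Fs j (or_intror sj)))).
by move=> g; rewrite big_cons.
Qed.

Lemma span_sum_ord P n (Q : pred 'I_n) (F : 'I_n -> vect k S) :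
  (forall i, Q i -> span P (F i)) -> span P (fun g => \sum_(i < n | Q i) F i g).
Proof.
move=> QF; apply: span_eq (span_sum (s := index_enum 'I_n)
                            (F := fun i g => if Q i then F i g else 0) _) => [g|i _].
  by rewrite [RHS]big_mkcond.
by case Qi: (Q i); [exact: QF|exact: span0].
Qed.

Lemma span_split P (I : Type) (b : I -> vect k S) v :
  span (fun w => P w \/ exists i, w = b i) v ->
  exists l : seq (int * I), span P (fun g => v g - \sum_(p <- l) p.1 * b p.2 g).
Proof.
move=> [L [HL ->]]; elim: L HL => [|[c w] L IH] HL.
  by exists [::]; apply: span_eq (span0 P) => g; rewrite !big_nil subr0.
case: IH => [p Lp|l Pl]; first by apply: HL; right.
case: (HL _ (or_introl erefl)) => /= [Pw|[i wi]].
  exists l; apply: span_eq (spanD (spanZ c (span_gen Pw)) Pl) => g.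
  by rewrite big_cons addrA.
exists ((c, i) :: l); apply: span_eq Pl => g.
by rewrite !big_cons /= wi opprD addrACA subrr add0r.
Qed.

End Spans.

Lemma Gsub_ext (k : nat) (S : Type) Lam a (P Q : vect k S -> Prop) :
  (forall v, P v <-> Q v) -> forall v, Gsub Lam a P v <-> Gsub Lam a Q v.
Proof. by move=> PQ v; split; apply: span_sub => w [/PQ|]; [left|right|left|right]. Qed.

Lemma free_quot_ext (k : nat) (S : Type) (H1 H2 H1' H2' : vect k S -> Prop) :
  (forall v, H1 v <-> H1' v) -> (forall v, H2 v <-> H2' v) ->
  free_quot H1 H2 -> free_quot H1' H2'.
Proof.
move=> E1 E2 [I [b [bH1 [sp ind]]]]; exists I, b; split; first by move=> i; apply/E1.
split; first by move=> v /E1 /sp [l Hl]; exists l; apply/E2.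
by move=> l nd /E2; apply: ind.
Qed.

Lemma gensU_sub (k : nat) (S : Type) (Lam : wseq k S -> Prop) (P Q : (nat -> S) -> Prop) v :
  (forall x, P x -> Q x) -> gensU Lam P v -> gensU Lam Q v.
Proof.
move=> PQ [->|[[eta [n [L [etaP ->]]]]|[eta [m [n [L [etaP ->]]]]]]].
- by left.
- by right; left; exists eta, n; split=> //; split=> // l; apply: PQ.
- by right; right; exists eta, m, n; split=> //; split=> // l; apply: PQ.
Qed.

Lemma restr_inj (k : nat) (S : Type) (nu eta : wseq k S) m m' n n' :
  restr nu m n = restr eta m' n' ->
  [/\ m = m', n = n', forall l, l != m -> nu l = eta l & mkseq (nu m) n = mkseq (eta m) n].
Proof.
move=> E; have := congr1 (fun f => f m) E; rewrite /restr /= eqxx.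
case: eqP => [mm' [Es]|//]; subst m'.
have En : n = n' by have := congr1 size Es; rewrite !size_mkseq.
subst n'; split=> // l lm; have := congr1 (fun f => f l) E.
by rewrite /restr /= (negbTE lm); case.
Qed.

Lemma restr_coord_inj (k : nat) (S : Type) (nu eta : wseq k S) m n :
  restr nu m n = restr eta m n -> nu m = eta m -> nu = eta.
Proof.
case/restr_inj=> _ _ off _ Em; apply: functional_extensionality => l.
by case: (eqVneq l m) => [->|/off].
Qed.

Section Relations.
Variables (k : nat) (S : Type) (a : wseq k S -> nat -> int).
Local Open Scope ring_scope.

Lemma delta_id (g : gen k S) : delta g g = 1.
Proof. by rewrite /delta; case: excluded_middle_informative. Qed.

Lemma delta_neq (g g' : gen k S) : g' <> g -> delta g g' = 0.
Proof. by rewrite /delta; case: excluded_middle_informative. Qed.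

Lemma relv_supp eta n g : relv a eta n g <> 0 ->
  g = gy eta n.+1 \/ g = gy eta n \/ g = gz k S \/ exists m, g = gx (restr eta m n).
Proof.
move=> nz; apply: NNPP => out; apply: nz; rewrite /relv.
have [-> -> ->] : [/\ delta (gy eta n.+1) g = 0, delta (gy eta n) g = 0 & delta (gz k S) g = 0].
  by split; rewrite delta_neq // => gE; apply: out; do ?[by left|right].
rewrite big1 ?mulr0 ?subr0 // => m _; rewrite delta_neq // => gm.
by apply: out; do 3 right; exists m.
Qed.

Lemma relv_ySn eta n : relv a eta n (gy eta n.+1) = (n`!)%:Z.
Proof.
rewrite /relv delta_id !delta_neq.
- by rewrite big1 ?mulr1 ?mulr0 ?subr0 // => m _; rewrite delta_neq.
- by [].
- by case=> /eqP; rewrite eq_sym ltn_eqF.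
Qed.

Lemma relv_yn eta n : relv a eta n (gy eta n) = -1.
Proof.
rewrite /relv delta_id !delta_neq.
- by rewrite big1 ?mulr1 ?mulr0 ?subr0 ?sub0r // => m _; rewrite delta_neq.
- by [].
- by case=> /eqP; rewrite ltn_eqF.
Qed.

Lemma relv_x eta n m : relv a eta n (gx (restr eta m n)) = -1.
Proof.
rewrite /relv !delta_neq // !mulr0 !subr0 sub0r (bigD1 m) //= delta_id big1 ?addr0 // => m' m'm.
by rewrite delta_neq // => -[/restr_inj [mm' _ _ _]]; rewrite mm' eqxx in m'm.
Qed.

Lemma relv_expand_y eta n g : delta (gy eta n) g =
  (n`!)%:Z * delta (gy eta n.+1) g - a eta n * delta (gz k S) g
  - \sum_(m < k.+1) delta (gx (restr eta m n)) g - relv a eta n g.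
Proof. rewrite /relv; ring. Qed.

Lemma relv_expand_x eta n m0 g : delta (gx (restr eta m0 n)) g =
  (n`!)%:Z * delta (gy eta n.+1) g - delta (gy eta n) g - a eta n * delta (gz k S) g
  - \sum_(m < k.+1 | m != m0) delta (gx (restr eta m n)) g - relv a eta n g.
Proof. rewrite /relv [\sum_(m < k.+1) _](bigD1 m0) //=; ring. Qed.

End Relations.

Section SeparatingOrders.
Variables (k : nat) (S : Type) (Lam : wseq k S -> Prop).
Implicit Types (U : (nat -> S) -> Prop) (u : seq (nat -> S)) (eta nu : wseq k S).

Definition Lam_over U u eta : Prop :=
  [/\ Lam eta, forall l, U (eta l) \/ List.In (eta l) u
    & forall y, List.In y u -> exists l, eta l = y].

Definition separated_by U u (lt : wseq k S -> wseq k S -> Prop) eta : Prop :=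
  exists m : 'I_k.+1,
    (forall y, List.In y u -> exists l, l != m /\ eta l = y) /\
    exists N, forall n, N <= n -> forall nu, Lam_over U u nu ->
      restr nu m n = restr eta m n -> nu = eta \/ lt eta nu.

Definition separating_order U u lt : Prop :=
  strict_wf_on (Lam_over U u) lt /\ forall eta, Lam_over U u eta -> separated_by U u lt eta.

Lemma separating_order_countable U u :
  size u <= k -> card_le_aleph 0 U -> exists lt, separating_order U u lt.
Proof.
move=> su [f finj].
pose code y := if asbool (U y) then (f y).+1 else 0.
pose c eta := \max_(l < k.+1) code (eta l).
exists (fun x y => c x < c y); split; first exact: strict_wf_on_measure.
move=> eta [_ _ cov]; have [m mP] := exists_redundant_coord su cov.
exists m; split=> //.
have [small smallP] := finite_below finj (c eta).
have [N NP] := prefix_separates (small ++ u) (eta m).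
exists N => n Nn nu [_ nuU _] E; case: (ltnP (c eta) (c nu)) => [|le]; [by right|left].
apply: (restr_coord_inj E); apply: (NP n Nn); last by case/restr_inj: E.
apply: List.in_or_app; case: (nuU m) => [Um|]; [left|by right].
apply: smallP => //; apply: leq_trans le.
have : code (nu m) <= c nu by apply: (@leq_bigmax _ (fun l => code (nu l)) m).
by rewrite /code; case: asboolP.
Qed.

Section Step.
Variables (i : nat) (U : (nat -> S) -> Prop) (u : seq (nat -> S)).
Variable R : (nat -> S) -> (nat -> S) -> Prop.
Hypothesis IH : forall U' u', size u' + i <= k -> (forall y, List.In y u' -> ~ U' y) ->
  card_le_aleph i U' -> exists lt, separating_order U' u' lt.
Hypothesis su : size u + i.+1 <= k.
Hypothesis u_disj : forall y, List.In y u -> ~ U y.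
Hypothesis R_wo : well_order_on U R.
Hypothesis R_seg : forall x, U x -> card_le_aleph i (fun y => U y /\ R y x).

Let W := Lam_over U u.

Definition hasU eta := exists l, U (eta l).

Definition is_top eta al :=
  [/\ U al, exists l, eta l = al & forall l, U (eta l) -> eta l = al \/ R (eta l) al].

Lemma top_ex eta : exists al, hasU eta -> is_top eta al.
Proof.
case: (classic (hasU eta)) => [[l0 Ul0]|nU]; last by exists (eta ord0).
case: R_wo => irr [tr [tot _]].
have enumP l : List.In l (enum 'I_k.+1) by apply/In_mem; rewrite mem_enum.
case: (ex_maximal_In (P := fun l => U (eta l)) (r := fun l l' => R (eta l) (eta l'))
                     _ _ (ex_intro _ l0 (conj (enumP l0) Ul0))).
- by move=> l; apply: irr.
- by move=> l1 l2 l3; apply: tr.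
move=> m [_ [Um mmax]]; exists (eta m) => _; split=> //; first by exists m.
move=> l Ul; case: (tot _ _ Ul Um) => [->|[Rlm|Rml]]; [by left|by right|].
by case: (mmax l (enumP l) Ul).
Qed.

Definition top eta := proj1_sig (constructive_indefinite_description _ (top_ex eta)).

Lemma topP eta : hasU eta -> is_top eta (top eta).
Proof. exact: proj2_sig (constructive_indefinite_description _ (top_ex eta)). Qed.

Definition below al y := U y /\ R y al.

Lemma below_order_ex al : exists lt, U al -> separating_order (below al) (u ++ [:: al]) lt.
Proof.
case: (classic (U al)) => Ual; last by exists (fun _ _ => False).
have disj y : List.In y (u ++ [:: al]) -> ~ below al y.
  move=> yu [Uy Ryal]; case: (List.in_app_or _ _ _ yu) => [/u_disj //|[ya|[]]].
  by case: R_wo => irr _; apply: (irr al Ual); rewrite {1}ya.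
have size_ual : size (u ++ [:: al]) + i <= k by rewrite size_cat addn1 addSn -addnS.
by have [lt ltP] := IH size_ual disj (R_seg Ual); exists lt.
Qed.

Definition below_order al := proj1_sig (constructive_indefinite_description _ (below_order_ex al)).

Lemma below_orderP al : U al -> separating_order (below al) (u ++ [:: al]) (below_order al).
Proof. exact: proj2_sig (constructive_indefinite_description _ (below_order_ex al)). Qed.

Lemma Lam_over_top eta : W eta -> hasU eta ->
  Lam_over (below (top eta)) (u ++ [:: top eta]) eta.
Proof.
move=> [Leta etaU cov] /topP [Ut [l0 El0] tmax]; split=> // [l|y].
  case: (etaU l) => [Ul|ul]; last by right; apply: List.in_or_app; left.
  case: (tmax l Ul) => [->|Rl]; [by right; apply: List.in_or_app; right; left|by left].
by move=> yu; case: (List.in_app_or _ _ _ yu) => [/cov //|[<-|[]]]; exists l0.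
Qed.

Definition key eta : option (nat -> S) := if asbool (hasU eta) then Some (top eta) else None.

Lemma key_Some eta al : key eta = Some al -> hasU eta /\ top eta = al.
Proof. by rewrite /key; case: asboolP => // h [<-]. Qed.

Lemma key_hasU eta : hasU eta -> key eta = Some (top eta).
Proof. by rewrite /key; case: asboolP. Qed.

Lemma key_noU eta : ~ hasU eta -> key eta = None.
Proof. by rewrite /key; case: asboolP. Qed.

Definition fiber_order (o : option (nat -> S)) :=
  if o is Some al then below_order al else fun _ _ => False.

Definition step_order := lex key (opt_lt R) fiber_order.

Lemma step_order_wf : strict_wf_on W step_order.
Proof.
apply: strict_wf_on_lex => [|[al|] [eta [Weta]]].
- apply: strict_wf_on_sub (strict_wf_on_opt (well_order_on_strict_wf R_wo)).
  by move=> [al|] // [eta [_ /key_Some [/topP [Ut _ _] <-]]].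
- case/key_Some=> hU <-; apply: strict_wf_on_sub (proj1 (below_orderP _)).
    by move=> nu [Wnu /key_Some [hnu <-]]; apply: Lam_over_top.
  by case: (topP hU).
- move=> _; split=> [x _ []|]; split=> [x y z _ _ _ []|Y _ [y Yy]].
  by exists y; split=> // y' _ [].
Qed.

Lemma step_separated_hasU eta : W eta -> hasU eta -> separated_by U u step_order eta.
Proof.
move=> Weta hU; have [Ut _ _] := topP hU.
have [_ sep] := below_orderP Ut.
have [m [mcov [N NP]]] := sep eta (Lam_over_top Weta hU).
exists m; split=> [y yu|]; first by apply: mcov; apply: List.in_or_app; left.
have [l0 [l0m El0]] : exists l, l != m /\ eta l = top eta.
  by apply: mcov; apply: List.in_or_app; right; left.
exists N => q Nq nu Wnu E.
have nul0 : nu l0 = top eta by case/restr_inj: E => _ _ off _; rewrite off.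
have hnu : hasU nu by exists l0; rewrite nul0.
have [_ _ numax] := topP hnu.
rewrite /step_order /lex key_hasU // key_hasU //.
case: (numax l0); rewrite nul0 //.
  move=> tE; have Wnu' : Lam_over (below (top eta)) (u ++ [:: top eta]) nu.
    by rewrite tE; apply: Lam_over_top.
  case: (NP q Nq nu Wnu' E) => [->|lt]; first by left.
  by right; right; rewrite -tE.
by move=> Rt; right; left.
Qed.

Lemma step_separated_noU eta : W eta -> ~ hasU eta -> separated_by U u step_order eta.
Proof.
move=> [_ etaU cov] nU.
have [m mP] := exists_redundant_coord (leq_trans (leq_addr _ _) su) cov.
exists m; split=> //; have [N NP] := prefix_separates u (eta m).
exists N => q Nq nu [_ nuU _] E; case: (classic (hasU nu)) => hnu.
  by right; left; rewrite key_noU // key_hasU.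
left; apply: (restr_coord_inj E); apply: (NP q Nq); last by case/restr_inj: E.
by case: (nuU m) => // Um; case: hnu; exists m.
Qed.

Lemma step_separating : exists lt, separating_order U u lt.
Proof.
exists step_order; split; first exact: step_order_wf.
move=> eta Weta; case: (classic (hasU eta)).
  exact: step_separated_hasU.
exact: step_separated_noU.
Qed.

End Step.

Theorem separating_order_exists i U u : size u + i <= k -> (forall y, List.In y u -> ~ U y) ->
  card_le_aleph i U -> exists lt, separating_order U u lt.
Proof.
elim: i U u => [|i IH] U u su disj.
  by rewrite addn0 in su; apply: separating_order_countable.
by case=> R [R_wo R_seg]; apply: (step_separating IH su disj R_wo R_seg).
Qed.

End SeparatingOrders.

Section Quotient.
Variables (k : nat) (S : Type) (Lam : wseq k S -> Prop) (a : wseq k S -> nat -> int).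
Variables (U : (nat -> S) -> Prop) (u : seq (nat -> S)) (lt : wseq k S -> wseq k S -> Prop).
Hypothesis u_disj : forall y, List.In y u -> ~ U y.
Hypothesis lt_sep : separating_order Lam U u lt.
Implicit Types (eta mu : wseq k S) (g : gen k S) (P : (nat -> S) -> Prop).

Local Notation W := (Lam_over Lam U u).
Local Open Scope ring_scope.

Lemma separation_ex eta : exists p : 'I_k.+1 * nat, W eta ->
  (forall y, List.In y u -> exists l, l != p.1 /\ eta l = y) /\
  (forall n, (p.2 <= n)%N -> forall nu, W nu ->
     restr nu p.1 n = restr eta p.1 n -> nu = eta \/ lt eta nu).
Proof.
case: (classic (W eta)) => Weta; last by exists (ord0, 0%N).
by have [m [mcov [N NP]]] := lt_sep.2 eta Weta; exists (m, N).
Qed.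

Definition separation eta := proj1_sig (constructive_indefinite_description _ (separation_ex eta)).
Definition sep_coord eta := (separation eta).1.
Definition sep_bound eta := (separation eta).2.

Lemma sep_coord_cov eta : W eta ->
  forall y, List.In y u -> exists l, l != sep_coord eta /\ eta l = y.
Proof. by move=> /(proj2_sig (constructive_indefinite_description _ (separation_ex eta))) []. Qed.

Lemma sep_bound_sep eta : W eta -> forall n, (sep_bound eta <= n)%N -> forall nu, W nu ->
  restr nu (sep_coord eta) n = restr eta (sep_coord eta) n -> nu = eta \/ lt eta nu.
Proof. by move=> /(proj2_sig (constructive_indefinite_description _ (separation_ex eta))) []. Qed.

Definition gen_of P g : Prop :=
  g = gz k S \/ (exists eta n, Lam eta /\ (forall l, P (eta l)) /\ g = gy eta n) \/
  (exists eta m n, Lam eta /\ (forall l, P (eta l)) /\ g = gx (restr eta m n)).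

Lemma gensU_delta P v : gensU Lam P v <-> exists g, v = delta g /\ gen_of P g.
Proof.
split.
  case=> [->|[[eta [n [L [H ->]]]]|[eta [m [n [L [H ->]]]]]]]; eexists; split; try reflexivity.
  - by left.
  - by right; left; exists eta, n.
  - by right; right; exists eta, m, n.
case=> g [-> [->|[[eta [n [L [H ->]]]]|[eta [m [n [L [H ->]]]]]]]].
- by left.
- by right; left; exists eta, n.
- by right; right; exists eta, m, n.
Qed.

Definition gen_Uu g :=
  exists e, List.In e u /\ gen_of (fun nu => U nu \/ (List.In nu u /\ nu <> e)) g.
Definition gen_Uplus g := gen_of (fun nu => U nu \/ List.In nu u) g.

Lemma gensUu_delta v : gensUu Lam U u v <-> exists g, v = delta g /\ gen_Uu g.
Proof.
split; first by case=> e [eu /gensU_delta [g [-> gP]]]; exists g; split=> //; exists e.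
by case=> g [-> [e [eu gP]]]; exists e; split=> //; apply/gensU_delta; exists g.
Qed.

Definition chosen_gen eta n :=
  if (n < sep_bound eta)%N then gy eta n else gx (restr eta (sep_coord eta) n).
Definition chosen g := exists eta n, W eta /\ g = chosen_gen eta n.
Definition basis g := [/\ gen_Uplus g, ~ gen_Uu g & ~ chosen g].

Lemma W_gy_not_Uu eta n : W eta -> ~ gen_Uu (gy eta n).
Proof.
move=> [_ _ cov] [e [eu [//|[[nu [n' [_ [nuP [E _]]]]]|[nu [m [n' [_ [_ //]]]]]]]]].
subst nu; by case: (cov e eu) => l El; case: (nuP l) => [|[_ //]]; rewrite El; apply: u_disj.
Qed.

Lemma W_gx_not_Uu eta n : W eta -> ~ gen_Uu (gx (restr eta (sep_coord eta) n)).
Proof.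
move=> Weta [e [eu [//|[[nu [n' [_ [_ //]]]]|[nu [m [n' [_ [nuP [/restr_inj [mE _ off _]]]]]]]]]]].
subst m; case: (sep_coord_cov Weta eu) => l [lm El].
by case: (nuP l); rewrite -off // El; [apply: u_disj|case].
Qed.

Lemma chosen_gen_not_Uu eta n : W eta -> ~ gen_Uu (chosen_gen eta n).
Proof. by rewrite /chosen_gen; case: ifP => _; [apply: W_gy_not_Uu|apply: W_gx_not_Uu]. Qed.

Lemma W_gy_Uplus eta n : W eta -> gen_Uplus (gy eta n).
Proof. by case=> L etaP _; right; left; exists eta, n. Qed.

Lemma W_gx_Uplus eta m n : W eta -> gen_Uplus (gx (restr eta m n)).
Proof. by case=> L etaP _; right; right; exists eta, m, n. Qed.

Lemma chosen_gy eta n : (sep_bound eta <= n)%N -> ~ chosen (gy eta n).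
Proof.
move=> bn [mu [n' [_]]]; rewrite /chosen_gen; case: ifP => // lt_n' [E E'].
by subst mu n'; rewrite ltnNge bn in lt_n'.
Qed.

Lemma chosen_gz : ~ chosen (gz k S).
Proof. by move=> [mu [n' [_]]]; rewrite /chosen_gen; case: ifP. Qed.

Lemma chosen_gx_owner eta m n mu n' : W eta -> W mu ->
  gx (restr eta m n) = chosen_gen mu n' ->
  [/\ sep_coord mu = m, n' = n, (sep_bound mu <= n)%N & eta = mu \/ lt mu eta].
Proof.
move=> Weta Wmu; rewrite /chosen_gen; case: ifP => // n'b [E].
case/restr_inj: (E) => mE n'E _ _; subst m n'.
have bn : (sep_bound mu <= n)%N by rewrite leqNgt n'b.
by split=> //; apply: (sep_bound_sep Wmu bn Weta E).
Qed.

Definition H2gen v := gensUu Lam U u v \/ relvecs Lam a v.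
Definition Ibasis := {g : gen k S | basis g}.
Definition bvec (i : Ibasis) : vect k S := delta (proj1_sig i).
Definition mod_basis := span (fun v => H2gen v \/ exists i, v = bvec i).

Lemma mod_basis_rel eta n : Lam eta -> mod_basis (relv a eta n).
Proof. by move=> L; apply: span_gen; left; right; exists eta, n. Qed.

Lemma mod_basis_gen g : gen_Uplus g -> (chosen g -> mod_basis (delta g)) -> mod_basis (delta g).
Proof.
move=> gT gC; case: (classic (gen_Uu g)) => [gA|ngA].
  by apply: span_gen; left; left; apply/gensUu_delta; exists g.
case: (classic (chosen g)) => [/gC //|nch].
by apply: span_gen; right; exists (exist _ g (And3 gT ngA nch)).
Qed.

Section ChosenStep.
Variable eta : wseq k S.
Hypothesis Weta : W eta.
Hypothesis IH : forall mu, W mu -> lt mu eta -> forall n, mod_basis (delta (chosen_gen mu n)).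

Lemma mod_basis_gx_unchosen m n : ~ (m = sep_coord eta /\ (sep_bound eta <= n)%N) ->
  mod_basis (delta (gx (restr eta m n))).
Proof.
move=> nch; apply: mod_basis_gen; first exact: W_gx_Uplus.
move=> [mu [n' [Wmu E]]]; have [mE _ bn [etamu|lt_mu]] := chosen_gx_owner Weta Wmu E.
  by case: nch; subst.
by rewrite E; apply: IH.
Qed.

Lemma mod_basis_gy_late n : (sep_bound eta <= n)%N -> mod_basis (delta (gy eta n)).
Proof.
move=> bn; apply: mod_basis_gen; first exact: W_gy_Uplus.
by move/(chosen_gy bn).
Qed.

Lemma mod_basis_gz : mod_basis (delta (gz k S)).
Proof. by apply: mod_basis_gen; [left|move/chosen_gz]. Qed.

Lemma mod_basis_gy n : mod_basis (delta (gy eta n)).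
Proof.
move: {2}(sep_bound eta - n)%N (erefl (sep_bound eta - n)%N) => d.
elim: d n => [|d IHd] n dn.
  by apply: mod_basis_gy_late; rewrite -subn_eq0 dn.
have nb : (n < sep_bound eta)%N by rewrite -subn_gt0 dn.
apply: span_eq (fun g => esym (relv_expand_y a eta n g)) _.
apply: spanB; last by case: Weta => L _ _; apply: mod_basis_rel.
apply: spanB; last first.
  by apply: span_sum_ord => m _; apply: mod_basis_gx_unchosen => -[_]; rewrite leqNgt nb.
apply: spanB; last exact: spanZ mod_basis_gz.
by apply: spanZ; apply: IHd; rewrite subnS dn.
Qed.

Lemma mod_basis_chosen_step n : mod_basis (delta (chosen_gen eta n)).
Proof.
rewrite /chosen_gen; case: ifP => [_|nb]; first exact: mod_basis_gy.
apply: span_eq (fun g => esym (relv_expand_x a eta n (sep_coord eta) g)) _.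
apply: spanB; last by case: Weta => L _ _; apply: mod_basis_rel.
apply: spanB; last first.
  by apply: span_sum_ord => m mc; apply: mod_basis_gx_unchosen => -[mE]; rewrite mE eqxx in mc.
apply: spanB; last exact: spanZ mod_basis_gz.
by apply: spanB; [apply: spanZ|]; apply: mod_basis_gy.
Qed.

End ChosenStep.

Lemma mod_basis_chosen eta n : W eta -> mod_basis (delta (chosen_gen eta n)).
Proof.
move=> Weta; move: eta Weta n; apply: (strict_wf_on_ind lt_sep.1) => eta Weta IH n.
exact: mod_basis_chosen_step.
Qed.

Lemma quotient_spanned v :
  Gsub Lam a (gensU Lam (fun nu => U nu \/ List.In nu u)) v ->
  exists l : seq (int * Ibasis),
    Gsub Lam a (gensUu Lam U u) (fun g => v g - \sum_(p <- l) p.1 * bvec p.2 g).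
Proof.
move=> [L [HL ->]]; apply: span_split; apply: span_sum => q Lq; apply: spanZ.
case: (HL q Lq) => [/gensU_delta [g [-> gT]]|[eta [n [L_eta ->]]]]; last exact: mod_basis_rel.
by apply: mod_basis_gen => // -[mu [n [Wmu ->]]]; apply: mod_basis_chosen.
Qed.

Inductive item := Igen of gen k S | Irel of wseq k S & nat.
Implicit Type L : seq (int * item).

Definition ivec it : vect k S := match it with Igen g => delta g | Irel eta n => relv a eta n end.
Definition item_valid it : Prop := match it with Igen g => gen_Uu g | Irel eta n => Lam eta end.
Definition valid_items (L : seq (int * item)) := forall q, List.In q L -> item_valid q.2.
Definition lincomb (L : seq (int * item)) g := \sum_(q <- L) q.1 * ivec q.2 g.
Definition coef (L : seq (int * item)) it := \sum_(q <- L | asbool (q.2 = it)) q.1.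

Lemma Gsub_Uu_items v : Gsub Lam a (gensUu Lam U u) v ->
  exists L, valid_items L /\ forall g, v g = lincomb L g.
Proof.
move=> [L0 [HL0 ->]]; elim: L0 HL0 => [|[c w] L0 IH] HL.
  by exists [::]; split=> // g; rewrite /lincomb !big_nil.
have [p Lp|L [VL E]] := IH; first by apply: HL; right.
have [it [wE Vit]] : exists it, w = ivec it /\ item_valid it.
  case: (HL _ (or_introl erefl)) => /= [/gensUu_delta [g [-> gA]]|[eta [n [L_eta ->]]]].
    by exists (Igen g).
  by exists (Irel eta n).
exists ((c, it) :: L); split; first by move=> q [<-|/VL].
by move=> g; rewrite /lincomb !big_cons -/(lincomb L g) -E wE.
Qed.

Lemma lincomb_split L it g : lincomb L g =
  coef L it * ivec it g + \sum_(q <- L | ~~ asbool (q.2 = it)) q.1 * ivec q.2 g.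
Proof.
rewrite /lincomb (bigID (fun q => asbool (q.2 = it))) /= /coef mulr_suml; congr (_ + _).
by apply: eq_bigr => q /asboolP ->.
Qed.

Lemma lincomb_single L it g : (forall q, List.In q L -> q.2 <> it -> ivec q.2 g = 0) ->
  lincomb L g = coef L it * ivec it g.
Proof.
move=> other; rewrite (lincomb_split _ it) big1_In ?addr0 // => q Lq /asboolP qit.
by rewrite other ?mulr0.
Qed.

Lemma lincomb_drop L it : coef L it = 0 ->
  forall g, lincomb L g = lincomb [seq q <- L | ~~ asbool (q.2 = it)] g.
Proof. by move=> c0 g; rewrite (lincomb_split _ it) c0 mul0r add0r /lincomb big_filter. Qed.

Lemma ex_maximal_rel (P : wseq k S * nat -> Prop) r (L : seq (int * item)) :
  (forall p, P p -> ~ r p p) ->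
  (forall p q s, P p -> P q -> P s -> r p q -> r q s -> r p s) ->
  (exists c eta n, List.In (c, Irel eta n) L /\ P (eta, n)) ->
  exists c eta n, [/\ List.In (c, Irel eta n) L, P (eta, n) &
    forall c' mu n', List.In (c', Irel mu n') L -> P (mu, n') -> ~ r (eta, n) (mu, n')].
Proof.
move=> irr tr [c [eta [n [Lq Pq]]]].
pose Pit (q : int * item) := exists eta n, q.2 = Irel eta n /\ P (eta, n).
pose rit (q q' : int * item) :=
  exists eta n mu n', [/\ q.2 = Irel eta n, q'.2 = Irel mu n' & r (eta, n) (mu, n')].
have Lex : exists q, List.In q L /\ Pit q by exists (c, Irel eta n); split=> //; exists eta, n.
case: (ex_maximal_In (P := Pit) (r := rit) _ _ Lex).
- move=> q [e [m [qE Pem]]] [e1 [m1 [e2 [m2 []]]]].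
  by rewrite qE => -[<- <-] [<- <-]; apply: irr.
- move=> q1 q2 q3 [e1 [m1 [E1 P1]]] [e2 [m2 [E2 P2]]] [e3 [m3 [E3 P3]]].
  move=> [f1 [n1 [f2 [n2 []]]]]; rewrite E1 E2 => -[<- <-] [<- <-] r12.
  move=> [f1' [n1' [f2' [n2' []]]]]; rewrite E2 E3 => -[<- <-] [<- <-] r23.
  by exists e1, m1, e3, m3; split=> //; apply: tr r12 r23.
move=> [c' it] [Lq' [[e [m /= [itE Pem]]] qmax]]; subst it.
exists c', e, m; split=> // c'' mu n' Lq'' Pmn rr.
by apply: (qmax (c'', Irel mu n') Lq''); [exists mu, n'|exists e, m, mu, n'].
Qed.

Definition inside (nu : wseq k S) := forall l, U (nu l) \/ List.In (nu l) u.
Definition outer_gy g := exists (nu : wseq k S) n, g = gy nu n /\ ~ inside nu.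
Definition vanishing L := forall g, chosen g \/ outer_gy g -> lincomb L g = 0.

Lemma gen_Uu_gy_inside eta n : gen_Uu (gy eta n) -> inside eta.
Proof.
move=> [e [_ [//|[[nu [n' [_ [nuP [E _]]]]]|[nu [m [n' [_ [_ //]]]]]]]]].
by subst nu => l; case: (nuP l) => [|[]]; [left|right].
Qed.

Lemma inner_rel_gen_Uu mu n g : Lam mu -> inside mu -> ~ W mu ->
  relv a mu n g <> 0 -> gen_Uu g.
Proof.
move=> Lmu ins nW nz.
have [e [eu emiss]] : exists e, List.In e u /\ forall l, mu l <> e.
  apply: NNPP => none; apply: nW; split=> // y yu; apply: NNPP => ny; apply: none.
  by exists y; split=> // l ly; apply: ny; exists l.
have muP l : U (mu l) \/ (List.In (mu l) u /\ mu l <> e).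
  by case: (ins l) => [|mul]; [left|right].
exists e; split=> //; case: (relv_supp nz) => [->|[->|[->|[m ->]]]].
- by right; left; exists mu, n.+1.
- by right; left; exists mu, n.
- by left.
- by right; right; exists mu, m, n.
Qed.

Definition pair_lt (p q : wseq k S * nat) : Prop :=
  lt p.1 q.1 \/ [/\ p.1 = q.1, (q.2 < p.2)%N & (p.2 < sep_bound p.1)%N].

Lemma pair_lt_irr p : W p.1 -> ~ pair_lt p p.
Proof. by case: lt_sep => [[irr _] _] Wp [/(irr _ Wp)|[_ pp _]] //; rewrite ltnn in pp. Qed.

Lemma pair_lt_trans p q s : W p.1 -> W q.1 -> W s.1 ->
  pair_lt p q -> pair_lt q s -> pair_lt p s.
Proof.
case: lt_sep => [[_ [tr _]] _] Wp Wq Ws [pq|[pq1 qp2 pb]] [qs|[qs1 sq2 qb]].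
- by left; apply: tr pq qs.
- by left; rewrite -qs1.
- by left; rewrite pq1.
- by right; split; [rewrite pq1|apply: ltn_trans sq2 qp2|].
Qed.

Lemma relv_chosen_gen eta n : relv a eta n (chosen_gen eta n) = -1.
Proof. by rewrite /chosen_gen; case: ifP => _; [apply: relv_yn|apply: relv_x]. Qed.

Lemma chosen_gen_in_relv eta mu n n' : W eta -> W mu ->
  relv a mu n' (chosen_gen eta n) <> 0 -> (mu = eta /\ n' = n) \/ pair_lt (eta, n) (mu, n').
Proof.
move=> Weta Wmu; rewrite /chosen_gen; case: ifP => nb.
  move/relv_supp => [[E1 E2]|[[E1 E2]|[//|[m //]]]]; subst mu n; last by left.
  by right; right; split.
move/relv_supp => [//|[//|[//|[m [E]]]]]; case/restr_inj: (E) => mE n'E _ _; subst m n'.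
have bn : (sep_bound eta <= n)%N by rewrite leqNgt nb.
by case: (sep_bound_sep Weta bn Wmu (esym E)) => [->|]; [left|right; left].
Qed.

Lemma coef_outer_rel L : valid_items L -> vanishing L ->
  (exists c eta n, List.In (c, Irel eta n) L /\ ~ inside eta) ->
  exists c it, List.In (c, it) L /\ coef L it = 0.
Proof.
move=> VL vanL out.
have [||c [eta [n [Lq /= etaout nmax]]]] :=
  ex_maximal_rel (P := fun p => ~ inside p.1) (r := fun p q => p.1 = q.1 /\ (p.2 < q.2)%N) _ _ out.
- by move=> p _ [_]; rewrite ltnn.
- by move=> p q s _ _ _ [-> pq] [-> qs]; split=> //; apply: ltn_trans qs.
exists c, (Irel eta n); split=> //.
(* By maximality of n, y_(eta,n+1) occurs in no other item of L. *)
have ySn_val : lincomb L (gy eta n.+1) = coef L (Irel eta n) * (n`!)%:Z.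
  rewrite (lincomb_single (it := Irel eta n)) /= ?relv_ySn //.
  move=> -[c' [g|mu n']] /= Lq' ne.
    rewrite delta_neq // => gE; subst g.
    by apply: etaout; apply: gen_Uu_gy_inside (VL _ Lq').
  apply: NNPP => /relv_supp [[E1 E2]|[[E1 E2]|[//|[m //]]]]; subst mu.
    by apply: ne; rewrite E2.
  by apply: (nmax c' eta n') => //; rewrite -E2.
have := vanL (gy eta n.+1) (or_intror (ex_intro _ eta (ex_intro _ n.+1 (conj erefl etaout)))).
rewrite ySn_val => /eqP; rewrite mulf_eq0 => /orP [/eqP //|/eqP [fact0]].
by have := fact_gt0 n; rewrite fact0.
Qed.

Lemma coef_W_rel L : valid_items L -> vanishing L ->
  (forall c eta n, List.In (c, Irel eta n) L -> inside eta) ->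
  (exists c eta n, List.In (c, Irel eta n) L /\ W eta) ->
  exists c it, List.In (c, it) L /\ coef L it = 0.
Proof.
move=> VL vanL ins exW.
have [||c [eta [n [Lq /= Weta nmax]]]] :=
  ex_maximal_rel (P := fun p => W p.1) (r := pair_lt) _ _ exW.
- exact: pair_lt_irr.
- exact: pair_lt_trans.
exists c, (Irel eta n); split=> //.
have chosen_val : lincomb L (chosen_gen eta n) = coef L (Irel eta n) * -1.
  rewrite (lincomb_single (it := Irel eta n)) /= ?relv_chosen_gen //.
  move=> -[c' [g|mu n']] /= Lq' ne.
    by rewrite delta_neq // => gE; subst g; apply: (chosen_gen_not_Uu Weta (VL _ Lq')).
  apply: NNPP => nz; case: (classic (W mu)) => Wmu.
    case: (chosen_gen_in_relv Weta Wmu nz) => [[E1 E2]|]; first by apply: ne; rewrite E1 E2.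
    exact: nmax Lq' Wmu.
  exact: (chosen_gen_not_Uu Weta (inner_rel_gen_Uu (VL _ Lq') (ins _ _ _ Lq') Wmu nz)).
have := vanL _ (or_introl (ex_intro _ eta (ex_intro _ n (conj Weta erefl)))).
by rewrite chosen_val mulrN1 => /eqP; rewrite oppr_eq0 => /eqP.
Qed.

Lemma lincomb_inner_rels L : valid_items L ->
  (forall c eta n, List.In (c, Irel eta n) L -> inside eta /\ ~ W eta) ->
  forall g, ~ gen_Uu g -> lincomb L g = 0.
Proof.
move=> VL ins g ngA; apply: big1_In => -[c [g'|mu n']] Lq _ /=.
  by rewrite delta_neq ?mulr0 // => gE; subst g'; apply: ngA (VL _ Lq).
have [insmu nWmu] := ins _ _ _ Lq.
case: (classic (relv a mu n' g = 0)) => [->|nz]; first by rewrite mulr0.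
by case: ngA; apply: inner_rel_gen_Uu (VL _ Lq) insmu nWmu nz.
Qed.

Lemma lincomb_vanishing L : valid_items L -> vanishing L ->
  forall g, ~ gen_Uu g -> lincomb L g = 0.
Proof.
move: {2}(size L) (leqnn (size L)) => N; elim: N L => [|N IHN] L sL VL vanL.
  by case: L sL {VL vanL} => // _ g _; rewrite /lincomb big_nil.
have drop c it : List.In (c, it) L -> coef L it = 0 -> forall g, ~ gen_Uu g -> lincomb L g = 0.
  move=> Lq c0 g ngA; rewrite (lincomb_drop c0); apply: IHN => //.
  - by rewrite -ltnS; apply: leq_trans sL; apply: (filter_size_lt Lq); rewrite negbK; apply/asboolP.
  - by move=> q /List.filter_In [Lq' _]; apply: VL.
  - by move=> g' g'P; rewrite -(lincomb_drop c0); apply: vanL.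
case: (classic (exists c eta n, List.In (c, Irel eta n) L /\ ~ inside eta)) => [out|allin].
  by have [c [it [Lq c0]]] := coef_outer_rel VL vanL out; apply: drop Lq c0.
have ins c eta n : List.In (c, Irel eta n) L -> inside eta.
  by move=> Lq; apply: NNPP => out; apply: allin; exists c, eta, n.
case: (classic (exists c eta n, List.In (c, Irel eta n) L /\ W eta)) => [exW|noW].
  by have [c [it [Lq c0]]] := coef_W_rel VL vanL ins exW; apply: drop Lq c0.
apply: lincomb_inner_rels => // c eta n Lq; split; first exact: ins Lq.
by move=> Weta; apply: noW; exists c, eta, n.
Qed.

Lemma bvec_coef (l : seq (int * Ibasis)) p : List.NoDup (map snd l) -> List.In p l ->
  \sum_(q <- l) q.1 * bvec q.2 (proj1_sig p.2) = p.1.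
Proof.
elim: l => [//|q l IH] /= nd lp; rewrite big_cons.
have [ql ndl] : ~ List.In q.2 (map snd l) /\ List.NoDup (map snd l) by inversion nd.
case: lp => [<-|lp].
  rewrite /bvec delta_id mulr1 big1_In ?addr0 // => q' lq' _.
  rewrite delta_neq ?mulr0 // => /sig_inj qE; apply: ql; rewrite qE.
  exact: List.in_map.
rewrite IH // /bvec delta_neq ?mulr0 ?add0r // => /sig_inj qE.
by apply: ql; rewrite -qE; apply: List.in_map.
Qed.

Lemma quotient_independent (l : seq (int * Ibasis)) : List.NoDup (map snd l) ->
  Gsub Lam a (gensUu Lam U u) (fun g => \sum_(p <- l) p.1 * bvec p.2 g) ->
  forall p, List.In p l -> p.1 = 0.
Proof.
move=> nd /Gsub_Uu_items [L [VL E]] p lp.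
have vanL : vanishing L.
  move=> g gP; rewrite -E big1_In // => q _ _; rewrite /bvec delta_neq ?mulr0 // => gE.
  case: (proj2_sig q.2); rewrite -gE => gT _ nch.
  case: gP => [//|[nu [n [gnu out]]]]; rewrite gnu in gT.
  case: gT => [//|[[eta [n' [_ [etaP [nuE _]]]]]|[eta [m [n' [_ [_ //]]]]]]].
  by apply: out; rewrite nuE.
have [_ ngA _] := proj2_sig p.2.
by have := lincomb_vanishing VL vanL ngA; rewrite -E bvec_coef.
Qed.

Theorem quotient_free : free_quot (Gsub Lam a (gensU Lam (fun nu => U nu \/ List.In nu u)))
                                  (Gsub Lam a (gensUu Lam U u)).
Proof.
exists Ibasis, bvec; split.
  move=> i; apply: span_gen; left; apply/gensU_delta; exists (proj1_sig i); split=> //.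
  by case: (proj2_sig i).
split; [exact: quotient_spanned | exact: quotient_independent].
Qed.

End Quotient.

Theorem claim1p12 (k : nat) (S : Type) (Lam : wseq k S -> Prop)
    (a : wseq k S -> nat -> int) :
  (forall (U : (nat -> S) -> Prop) (u : seq (nat -> S)) (j : nat),
      List.NoDup u ->
      (forall eta, List.In eta u -> ~ U eta) ->
      (j <= k)%N ->
      (size u <= j)%N ->
      card_le_aleph (k - j) U ->
      free_quot (Gsub Lam a (gensU Lam (fun nu => U nu \/ List.In nu u)))
                (Gsub Lam a (gensUu Lam U u))) /\
  (forall U : (nat -> S) -> Prop,
      card_le_aleph k U ->
      free_quot (Gsub Lam a (gensU Lam U)) (Gsub Lam a (fun _ => False))).
Proof.
(* Repetitions in u do no harm. *)
split=> [U u j _ disj jk uj card|U card].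
  have su : size u + (k - j) <= k by rewrite -[X in _ <= X](subnKC jk) leq_add2r.
  have [lt ltP] := separating_order_exists Lam su disj card.
  exact: quotient_free disj ltP.
have nil_disj : forall y, List.In y [::] -> ~ U y by [].
have [lt ltP] := separating_order_exists Lam (u := [::]) (leqnn k) nil_disj card.
apply: free_quot_ext (quotient_free a nil_disj ltP) => v; apply: Gsub_ext => w.
  by split; apply: gensU_sub => nu; [case=> [//|[]]|left].
by split=> [[e [[] _]]|].
Qed.
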